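(* Let $r,s>0$ and let $\mathbf{P}$ be a poset in $C(\{r,s\})$, i.e. $\mathbf{P}$ has an interval representation in which every interval has length $r$ or $s$. Then $\dim(\mathbf{P})\le 5$.
   Context: An interval representation of a poset $(X,P)$ assigns to each $x\in X$ a closed real interval $[l_x,r_x]$ such that $x<y$ in $P$ iff $r_x<l_y$; the length of $[l_x,r_x]$ is $r_x-l_x$. The dimension $\dim(\mathbf{P})$ is the minimum number of linear extensions of $P$ whose intersection is $P$. *)

From mathcomp Require Import all_boot all_order all_algebra.
From mathcomp Require Import reals.
Set Implicit Arguments. Unset Strict Implicit. Unset Printing Implicit Defensive.
Import Order.TTheory GRing.Theory Num.Theory.
Local Open Scope ring_scope.

(* A finite poset is given by its strict order relation [P : rel T]. *)

Definition interval_rep (R : realType) (T : finType) (P : rel T)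
  (l r : T -> R) : Prop :=
  (forall x, l x <= r x) /\ (forall x y, P x y <-> r x < l y).

Definition in_C (R : realType) (S : pred R) (T : finType) (P : rel T) : Prop :=
  exists (l r : T -> R), interval_rep P l r /\ (forall x, r x - l x \in S).

Definition linear_extension (T : finType) (P L : rel T) : Prop :=
  irreflexive L /\ transitive L /\ (forall x y, x != y -> L x y || L y x)
  /\ (forall x y, P x y -> L x y).

Definition realizer (T : finType) (P : rel T) (k : nat) (L : 'I_k -> rel T) : Prop :=
  (forall i, linear_extension P (L i)) /\ (forall x y, P x y <-> forall i, L i x y).

Definition dim_le (T : finType) (P : rel T) (d : nat) : Prop :=
  exists k : nat, (k <= d)%N /\ exists L : 'I_k -> rel T, realizer P L.

From mathcomp Require Import all_boot all_order all_algebra.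
From mathcomp Require Import reals.
From mathcomp Require Import lra zify.
Set Implicit Arguments.
Unset Strict Implicit.
Unset Printing Implicit Defensive.
Import Order.TTheory GRing.Theory Num.Theory.
Local Open Scope ring_scope.

(* Split the elements into the class S of intervals of length r and the class
   of intervals of length s.  After rescaling, P restricted to either class is
   a unit interval order, x < y iff u x + 1 < u y, and such an order is
   realized by three linear orders: sort by the blocks [2n, 2n + 2) of u, resp.
   [2n + 1, 2n + 3), and by fractional part inside a block; or sort by the
   blocks [n, n + 1) and decreasingly inside a block.  As P has no induced
   2 + 2, the i-th orders of the two classes glue together with P into a strict
   order, which we linearize: this gives three linear extensions of P reversing
   every incomparable pair inside a class.  Two more linear extensions, sorting
   the intervals of one class by right endpoint and those of the other class by
   left endpoint, reverse every incomparable pair across the classes. *)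

Section StrictOrders.
Variable T : eqType.
Implicit Types (L : rel T) (x y : T).

Definition strict_order L := irreflexive L /\ transitive L.

Definition strict_total L :=
  strict_order L /\ forall x y, x != y -> L x y || L y x.

Lemma strict_order_asym L x y : strict_order L -> L x y -> L y x -> False.
Proof. by case=> irr tr /tr /[apply]; rewrite irr. Qed.

Lemma strict_total_rev L : strict_total L -> strict_total (fun x y => L y x).
Proof.
case=> [[irr tr] tot]; split; first by split=> // y x z h1 h2; exact: tr h2 h1.
by move=> x y /tot; rewrite orbC.
Qed.

Definition reflc L : rel T := fun x y => (x == y) || L x y.

Lemma reflc_lt_trans L x y z : transitive L -> reflc L x y -> L y z -> L x z.
Proof. by move=> tr /orP[/eqP->//|xy] /(tr _ _ _ xy). Qed.

Lemma lt_reflc_trans L x y z : transitive L -> L x y -> reflc L y z -> L x z.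
Proof. by move=> tr xy /orP[/eqP<-//|/(tr _ _ _ xy)]. Qed.

End StrictOrders.

Section LexKeys.
Variables (d : Order.disp_t) (K : orderType d) (T : eqType).

Fixpoint lex_keys (ks : seq (T -> K)) (tie : rel T) (x y : T) : bool :=
  if ks is k :: ks' then (k x < k y)%O || (k x == k y) && lex_keys ks' tie x y
  else tie x y.

Lemma lex_keys_strict_total ks (tie : rel T) :
  strict_total tie -> strict_total (lex_keys ks tie).
Proof.
elim: ks => [//|k ks IH] /IH [[irr tr] tot]; split; first split.
- by move=> x /=; rewrite ltxx eqxx irr.
- move=> y x z /= /orP[xy|/andP[/eqP exy xy]] /orP[yz|/andP[/eqP eyz yz]].
  + by rewrite (lt_trans xy yz).
  + by rewrite -eyz xy.
  + by rewrite exy yz.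
  + by rewrite exy eyz eqxx (tr _ _ _ xy yz) orbT.
- by move=> x y /tot /=; case: ltgtP.
Qed.

End LexKeys.

Definition realizes_on (T : eqType) (P : rel T) (A : pred T) (k : nat)
    (L : 'I_k -> rel T) :=
  [/\ forall i, strict_order (L i),
      forall i, {in A &, forall x y, P x y -> L i x y}
    & forall x y, x \in A -> y \in A -> x != y -> ~~ P x y -> exists i, L i y x].

Definition two_plus_two_free (T : Type) (P : rel T) :=
  forall a b c d, P a b -> P c d -> P a d || P c b.

Section Linearization.
Variable T : finType.
Implicit Types (P L C : rel T).

Definition enum_lt : rel T := fun x y => (enum_rank x < enum_rank y)%N.

Lemma enum_lt_strict_total : strict_total enum_lt.
Proof.
split; first by split=> [x|y x z]; [exact: ltnn | exact: ltn_trans].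
move=> x y nxy; rewrite /enum_lt -neq_ltn.
by apply: contra nxy => /eqP/val_inj/enum_rank_inj ->.
Qed.

Lemma linear_extension_strict_total P L :
  strict_total L -> subrel P L -> linear_extension P L.
Proof. by case=> [[irr tr] tot] PL. Qed.

Lemma linear_extension_asym P L x y : linear_extension P L -> L y x -> ~~ L x y.
Proof.
by case=> irr [tr _] yx; apply/negP => xy; apply: strict_order_asym (conj irr tr) xy yx.
Qed.

Lemma realizer_of_reversing P k (L : 'I_k -> rel T) :
  (forall i, linear_extension P (L i)) ->
  (forall x y, ~~ P x y -> exists i, ~~ L i x y) -> realizer P L.
Proof.
move=> ext rev; split=> // x y; split=> [xy i|all].
  by case: (ext i) => _ [_ [_]]; apply.
by apply/idPn => /rev [i /negP]; apply.
Qed.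

Definition linearization C : rel T :=
  lex_keys [:: fun x => #|[set z | C z x]| ] enum_lt.

Lemma linearization_strict_total C : strict_total (linearization C).
Proof. exact/lex_keys_strict_total/enum_lt_strict_total. Qed.

Lemma sub_linearization C : strict_order C -> subrel C (linearization C).
Proof.
case=> irr tr x y xy; apply/orP; left; apply: proper_card.
rewrite properE; apply/andP; split.
- by apply/subsetP => z; rewrite !inE => zx; exact: tr zx xy.
- by apply/subsetPn; exists x; rewrite !inE ?xy ?irr.
Qed.

End Linearization.

Section Merge.
Variables (T : finType) (P : rel T) (c : T -> bool) (L : bool -> rel T).
Hypothesis P_2p2 : two_plus_two_free P.
Hypothesis L_order : forall b, strict_order (L b).
Hypothesis P_sub_L : forall x y, c x = c y -> P x y -> L (c x) x y.

Definition bridge : rel T := fun x y =>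
  [exists a, exists b, [&& c a == c x, c b == c y,
     reflc (L (c x)) x a, P a b & reflc (L (c y)) b y]].

Definition merge_orders : rel T := fun x y =>
  if c x == c y then L (c x) x y else bridge x y.

Let L_trans b : transitive (L b). Proof. by case: (L_order b). Qed.

Lemma lt_bridge_trans x y z :
  c x = c y -> L (c x) x y -> bridge y z -> bridge x z.
Proof.
move=> exy xy /existsP[a /existsP[b /and5P[ay bz ya ab b_z]]].
apply/existsP; exists a; apply/existsP; exists b; rewrite exy in xy *.
by rewrite ay bz ab b_z /reflc (lt_reflc_trans (@L_trans _) xy ya) orbT.
Qed.

Lemma bridge_lt_trans x y z :
  c y = c z -> bridge x y -> L (c y) y z -> bridge x z.
Proof.
move=> eyz /existsP[a /existsP[b /and5P[ax b_y xa ab b_y']]] yz.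
apply/existsP; exists a; apply/existsP; exists b; rewrite -eyz.
by rewrite ax b_y xa ab /reflc (reflc_lt_trans (@L_trans _) b_y' yz) orbT.
Qed.

Lemma bridge_bridge x y z : c x = c z -> bridge x y -> bridge y z -> L (c x) x z.
Proof.
move=> exz /existsP[a /existsP[b /and5P[/eqP ax /eqP b_y xa ab b_y']]].
move=> /existsP[b' /existsP[a' /and5P[/eqP b'y /eqP a'z yb' b'a' a'z']]].
have /orP[aa'|b'b] := P_2p2 ab b'a'.
  have /P_sub_L/(_ aa') : c a = c a' by rewrite ax a'z.
  rewrite ax => /(reflc_lt_trans (@L_trans _) xa) xa'.
  by rewrite exz in xa' *; apply: lt_reflc_trans (@L_trans _) xa' a'z'.
have /P_sub_L/(_ b'b) : c b' = c b by rewrite b'y b_y.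
rewrite b'y => b'b_L.
have := reflc_lt_trans (@L_trans _) yb' (lt_reflc_trans (@L_trans _) b'b_L b_y').
by case: (L_order (c y)) => irr _; rewrite irr.
Qed.

Lemma merge_orders_class x y : c x = c y -> merge_orders x y = L (c x) x y.
Proof. by rewrite /merge_orders => ->; rewrite eqxx. Qed.

Lemma sub_merge_orders : subrel P merge_orders.
Proof.
move=> x y xy; rewrite /merge_orders; case: eqVneq => [exy|_]; first exact: P_sub_L.
by apply/existsP; exists x; apply/existsP; exists y; rewrite /reflc !eqxx xy.
Qed.

Lemma merge_orders_strict : strict_order merge_orders.
Proof.
split=> [x|y x z]; first by rewrite /merge_orders eqxx; case: (L_order (c x)).
rewrite /merge_orders.
have [exy|nxy] := eqVneq (c x) (c y); have [eyz|nyz] := eqVneq (c y) (c z).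
- rewrite exy eyz eqxx; exact: (@L_trans (c z)).
- by rewrite ifN; [exact: lt_bridge_trans | rewrite exy].
- by rewrite ifN -?eyz //; apply: bridge_lt_trans.
- have exz : c x = c z by move: nxy nyz; case: (c x) (c y) (c z) => [] [] [].
  rewrite exz eqxx -exz; exact: bridge_bridge.
Qed.

Lemma linearization_merge_ext : linear_extension P (linearization merge_orders).
Proof.
apply: linear_extension_strict_total; first exact: linearization_strict_total.
by move=> x y /sub_merge_orders; apply: (sub_linearization merge_orders_strict).
Qed.

Lemma linearization_merge_rev x y :
  c x = c y -> L (c x) y x -> ~~ linearization merge_orders x y.
Proof.
move=> exy yx; apply/negP => xy.
have [Mstrict _] := linearization_strict_total merge_orders.
apply: strict_order_asym Mstrict xy (sub_linearization merge_orders_strict _).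
by rewrite merge_orders_class -exy.
Qed.

End Merge.

Lemma glue_class_realizers (T : finType) (P : rel T) (S : pred T) k
    (LS LB : 'I_k -> rel T) :
  two_plus_two_free P -> realizes_on P S LS -> realizes_on P (predC S) LB ->
  exists M : 'I_k -> rel T, (forall i, linear_extension P (M i)) /\
    forall x y, (x \in S) = (y \in S) -> x != y -> ~~ P x y -> exists i, ~~ M i x y.
Proof.
move=> P2p2 [LS_ord LS_ext LS_rev] [LB_ord LB_ext LB_rev].
pose c x := x \in S; pose L i b := if b then LS i else LB i.
have L_ord i b : strict_order (L i b) by case: b; [exact: LS_ord | exact: LB_ord].
have P_sub_L i x y : c x = c y -> P x y -> L i (c x) x y.
  rewrite /c /L; case: (boolP (x \in S)) => /= xS yS.
    by apply: LS_ext; rewrite -?yS.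
  by move/esym/negbT: yS => yS; apply: LB_ext.
exists (fun i => linearization (merge_orders P c (L i))).
split=> [i|x y exy nexy nxy].
  exact: linearization_merge_ext P2p2 (L_ord i) (P_sub_L i).
have [i yx] : exists i, L i (c x) y x.
  rewrite /c /L; case: (boolP (x \in S)) exy => /= xS yS.
    by apply: LS_rev; rewrite -?yS.
  by move/esym/negbT: yS => yS; apply: LB_rev.
by exists i; apply: (linearization_merge_rev P2p2 (L_ord i) (P_sub_L i)).
Qed.

Section Floor.
Variable R : archiRealFieldType.
Implicit Types a b : R.

Lemma floor_half_bounds a :
  let A := Num.floor (a / 2) in A + A <= Num.floor a <= A + A + 1.
Proof.
rewrite /= floor_ge_int -ltzD1 floor_lt_int !intrD.
have := floor_le (a / 2); have := floorD1_gt (a / 2); rewrite intrD.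
by move=> ? ?; apply/andP; split; lra.
Qed.

Lemma floor_half_eq a b :
  Num.floor a = Num.floor b -> Num.floor (a / 2) = Num.floor (b / 2).
Proof.
move=> eab; have /andP[] := floor_half_bounds a; rewrite eab.
rewrite floor_ge_int -ltzD1 floor_lt_int !intrD => b_lo b_hi.
by apply/esym/floor_def; rewrite intrD; apply/andP; split; lra.
Qed.

Lemma floorD1 a : Num.floor (a + 1) = Num.floor a + 1.
Proof. by rewrite floorDrz ?floor1 // rpred1. Qed.

End Floor.

Section Semiorder.
Variables (R : archiRealFieldType) (T : eqType) (tie : rel T).
Hypothesis tie_total : strict_total tie.
Implicit Types (u v : T -> R) (x y : T).

Definition two_block_order v : rel T :=
  lex_keys [:: fun x => (Num.floor (v x / 2))%:~R;
               fun x => v x - (Num.floor (v x))%:~R; fun x => - v x] tie.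

Definition unit_block_order u : rel T :=
  lex_keys [:: fun x => (Num.floor (u x))%:~R; fun x => - u x] (fun x y => tie y x).

Definition semiorder_orders u (i : 'I_3) : rel T :=
  match val i with
  | 0%N => two_block_order u
  | 1%N => two_block_order (fun x => u x + 1)
  | _ => unit_block_order u
  end.

Lemma two_block_order_ext v x y : v x + 1 < v y -> two_block_order v x y.
Proof.
move=> xy; rewrite /two_block_order /=.
have : Num.floor (v x / 2) <= Num.floor (v y / 2) by apply: le_floor; lra.
rewrite le_eqVlt => /orP[/eqP e|]; last by rewrite ltr_int => ->.
rewrite e ltxx eqxx /=; apply/orP; left; set A := Num.floor (v y / 2) in e *.
have := floor_le (v x / 2); have := floorD1_gt (v y / 2).
rewrite e -/A intrD => y_hi x_lo.
have -> : Num.floor (v x) = A + A.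
  by apply: floor_def; rewrite !intrD; apply/andP; split; lra.
have -> : Num.floor (v y) = A + A + 1.
  by apply: floor_def; rewrite !intrD; apply/andP; split; lra.
rewrite !intrD; lra.
Qed.

Lemma two_block_order_rev v (A : int) x y :
  Num.floor (v x) = A + A -> Num.floor (v y) = A + A + 1 -> v y <= v x + 1 ->
  two_block_order v y x.
Proof.
move=> Fx Fy yx; rewrite /two_block_order /=.
have := floor_le (v x); have := floorD1_gt (v x).
have := floor_le (v y); have := floorD1_gt (v y).
rewrite Fx Fy !intrD => y_hi y_lo x_hi x_lo.
have -> : Num.floor (v x / 2) = A.
  by apply: floor_def; rewrite intrD; apply/andP; split; lra.
have -> : Num.floor (v y / 2) = A.
  by apply: floor_def; rewrite intrD; apply/andP; split; lra.
rewrite ltxx eqxx /=; move: yx; rewrite le_eqVlt => /orP[/eqP->|yx].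
  by apply/orP; right; apply/andP; split; [apply/eqP; lra | apply/orP; left; lra].
by apply/orP; left; lra.
Qed.

Lemma unit_block_order_ext u x y : u x + 1 < u y -> unit_block_order u x y.
Proof.
move=> xy; rewrite /unit_block_order /=; apply/orP; left.
have := floor_le (u x); have := floorD1_gt (u y); rewrite intrD; lra.
Qed.

Lemma semiorder_orders_ext u x y :
  u x + 1 < u y -> forall i, semiorder_orders u i x y.
Proof.
move=> xy [[|[|[|//]]] ?] /=; first exact: two_block_order_ext.
  by apply: two_block_order_ext; lra.
exact: unit_block_order_ext.
Qed.

Lemma semiorder_orders_rev_lt u x y :
  u x < u y -> u y <= u x + 1 -> exists i, semiorder_orders u i y x.
Proof.
move=> xy yx; have := le_floor (ltW xy); rewrite le_eqVlt => /orP[/eqP F|Flt].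
  exists ord_max; rewrite /semiorder_orders /unit_block_order /= F ltxx eqxx /=.
  by apply/orP; left; lra.
have Fy : Num.floor (u y) = Num.floor (u x) + 1.
  suff : Num.floor (u y) < Num.floor (u x) + 1 + 1 by lia.
  by rewrite floor_lt_int !intrD; have := floorD1_gt (u x); rewrite intrD; lra.
have /andP[] := floor_half_bounds (u x); set A := Num.floor (u x / 2) => Fx_lo Fx_hi.
have [Fx|Fx] : Num.floor (u x) = A + A \/ Num.floor (u x) = A + A + 1 by lia.
  by exists ord0; apply: (two_block_order_rev (A := A)) => //; lia.
exists (@Ordinal 3 1 isT); apply: (two_block_order_rev (A := A + 1)).
- by rewrite floorD1; lia.
- by rewrite floorD1; lia.
- by lra.
Qed.

Lemma semiorder_orders_rev u x y :
  x != y -> u y <= u x + 1 -> exists i, semiorder_orders u i y x.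
Proof.
move=> nxy yx; have [xy|xy|e] := ltgtP (u x) (u y).
- exact: semiorder_orders_rev_lt.
- have := le_floor (ltW xy); rewrite le_eqVlt => /orP[/eqP F|Flt].
    exists ord0; rewrite /semiorder_orders /two_block_order /=.
    by rewrite (floor_half_eq F) F ltxx eqxx /=; apply/orP; left; lra.
  by exists ord_max; rewrite /semiorder_orders /unit_block_order /= ltr_int Flt.
- case/orP: (tie_total.2 _ _ nxy) => [txy|tyx].
    by exists ord_max; rewrite /semiorder_orders /unit_block_order /= e !ltxx !eqxx.
  by exists ord0; rewrite /semiorder_orders /two_block_order /= e !ltxx !eqxx.
Qed.

Lemma semiorder_realizes (P : rel T) (A : pred T) u :
  {in A &, forall x y, P x y = (u x + 1 < u y)} -> realizes_on P A (semiorder_orders u).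
Proof.
move=> PA; split.
- move=> i; suff [] : strict_total (semiorder_orders u i) by [].
  case: i => [[|[|[|//]]] ?]; apply: lex_keys_strict_total => //.
  exact: strict_total_rev.
- by move=> i x y xA yA; rewrite PA // => /semiorder_orders_ext; apply.
- by move=> x y xA yA nxy; rewrite PA // -leNgt; exact: semiorder_orders_rev.
Qed.

End Semiorder.

Section IntervalRep.
Variables (R : realType) (T : finType) (P : rel T) (lo hi : T -> R).
Hypothesis rep : interval_rep P lo hi.

Lemma interval_rep_two_plus_two_free : two_plus_two_free P.
Proof.
case: rep => _ Piff a b c d /Piff ab /Piff cd; apply/orP.
by case: (ltP (hi a) (lo d)) => h; [left | right]; apply/Piff; lra.
Qed.

Lemma interval_rep_semiorder (A : pred T) (w : R) :
  0 < w -> {in A, forall x, hi x = lo x + w} ->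
  {in A &, forall x y, P x y = (lo x / w + 1 < lo y / w)}.
Proof.
case: rep => _ Piff w0 hiA x y xA yA.
rewrite -(ltr_pM2r w0) mulrDl !divfK ?gt_eqF // mul1r -hiA //.
by apply/idP/idP => /Piff.
Qed.

Definition endpoint_order (S : pred T) : rel T :=
  lex_keys [:: fun x => if x \in S then hi x else lo x; fun x => (x \in S)%:R]
    (@enum_lt T).

Lemma endpoint_order_linear_extension S : linear_extension P (endpoint_order S).
Proof.
case: rep => lohi Piff; apply: linear_extension_strict_total.
  exact/lex_keys_strict_total/enum_lt_strict_total.
move=> x y /Piff xy; apply/orP; left; have := lohi x; have := lohi y.
by case: (x \in S); case: (y \in S) => /= ? ?; lra.
Qed.

Lemma endpoint_order_rev S x y :
  x \in S -> y \notin S -> ~~ P x y -> endpoint_order S y x.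
Proof.
case: rep => _ Piff xS yS /negP nxy.
have : lo y <= hi x by rewrite leNgt; apply/negP => /Piff.
rewrite /endpoint_order /= xS (negbTE yS) le_eqVlt => /orP[/eqP->|->//].
by rewrite ltxx eqxx ltr01 orbT.
Qed.

End IntervalRep.

Lemma dim_le_two_classes (T : finType) (P : rel T) (S : pred T) k
    (LS LB : 'I_k -> rel T) (E1 E2 : rel T) :
  two_plus_two_free P -> realizes_on P S LS -> realizes_on P (predC S) LB ->
  linear_extension P E1 -> linear_extension P E2 ->
  (forall x y, x \in S -> y \notin S -> ~~ P x y -> E1 y x) ->
  (forall x y, x \notin S -> y \in S -> ~~ P x y -> E2 y x) ->
  dim_le P (k + 2).
Proof.
move=> P2p2 LS_real LB_real E1_ext E2_ext E1_rev E2_rev.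
have [M [M_ext M_rev]] := glue_class_realizers P2p2 LS_real LB_real.
pose F (j : 'I_(k + 2)) :=
  match split j with inl i => M i | inr j => if j == ord0 then E1 else E2 end.
have F_M i : F (lshift 2 i) = M i by rewrite /F (unsplitK (inl _ i)).
have F_E1 : F (rshift k ord0) = E1 by rewrite /F (unsplitK (inr _ ord0)).
have F_E2 : F (rshift k ord_max) = E2 by rewrite /F (unsplitK (inr _ ord_max)).
exists (k + 2)%N; split=> //; exists F; apply: realizer_of_reversing.
  by move=> j; rewrite /F; case: split => [i|j']; [exact: M_ext | case: eqP].
move=> x y nxy; have [<-|nexy] := eqVneq x y.
  by exists (rshift k ord0); rewrite F_E1; case: E1_ext => ->.
have [exy|] := eqVneq (x \in S) (y \in S).
  by have [i Mi] := M_rev x y exy nexy nxy; exists (lshift 2 i); rewrite F_M.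
case: (boolP (x \in S)) => xS; case: (boolP (y \in S)) => // yS _.
  by exists (rshift k ord0); rewrite F_E1 (linear_extension_asym E1_ext) ?E1_rev.
by exists (rshift k ord_max); rewrite F_E2 (linear_extension_asym E2_ext) ?E2_rev.
Qed.

Theorem proposition6p1 (R : realType) (r s : R) (T : finType) (P : rel T) :
  0 < r -> 0 < s ->
  in_C [pred t : R | (t == r) || (t == s)] P ->
  dim_le P 5.
Proof.
move=> r0 s0 [lo [hi [rep len]]].
pose S := [pred x | hi x - lo x == r].
have hiS : {in S, forall x, hi x = lo x + r} by move=> x /eqP <-; rewrite addrC subrK.
have hiB : {in predC S, forall x, hi x = lo x + s}.
  move=> x; rewrite !inE; have := len x; rewrite !inE => /orP[->//|/eqP <- _].
  by rewrite addrC subrK.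
apply: (@dim_le_two_classes _ _ S 3
  (semiorder_orders (@enum_lt T) (fun x => lo x / r))
  (semiorder_orders (@enum_lt T) (fun x => lo x / s))
  (endpoint_order lo hi S) (endpoint_order lo hi (predC S))).
- exact: interval_rep_two_plus_two_free rep.
- exact (semiorder_realizes (enum_lt_strict_total T)
    (interval_rep_semiorder rep r0 hiS)).
- exact (semiorder_realizes (enum_lt_strict_total T)
    (interval_rep_semiorder rep s0 hiB)).
- exact: endpoint_order_linear_extension.
- exact: endpoint_order_linear_extension.
- exact: endpoint_order_rev.
- by move=> x y xS yS; apply: endpoint_order_rev; rewrite ?inE ?negbK.
Qed.
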